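(* Let $T_1=(Q_1,\Sigma,\Delta,R_1,q_1^0)$ and $T_2=(Q_2,\Delta,\Omega,R_2,q_2^0)$ be top-down tree transducers, let $\hat{T}_1$ be the product construction of $T_1$ and the domain automaton of $T_2$, and let $M$ be the look-ahead transducer constructed from $T_1$ and $T_2$ as described in the context. Let $(q_1,S)$ be a state of $\hat{T}_1$ and $q_2$ a state of $T_2$ such that $(q_1,S,q_2)$ is a state of $M$. If on input $s\in T_\Sigma$ the state $(q_1,S)$ of $\hat{T}_1$ can produce the tree $t$, and on input $t$ the state $q_2$ of $T_2$ can produce the tree $r$, then the state $(q_1,S,q_2)$ of $M$ can produce $r$ on input $s$.
   Context: A top-down tree transducer $T=(Q,\Sigma,\Delta,R,q_0)$ has finite state set $Q$, ranked input/output alphabets $\Sigma,\Delta$, initial state $q_0$, and finite rule set $R$ of rules $q(a(x_1,\dots,x_k))\to t$ with $a\in\Sigma_k$ ($\Sigma_k$ = symbols of rank $k$) and $t$ a tree over $\Delta$ whose leaves may additionally be of the form $q'(x_i)$, $q'\in Q$, $i\in[k]$; rules are used as rewrite rules in the usual way; a state $q$ produces $t$ on input $s$ if the tree $t$ over $\Delta$ is derivable from $q(s)$. For $q\in Q$, $a\in\Sigma_k$, $\text{rhs}_T(q,a)$ is the set of right-hand sides of rules with left-hand side $q(a(x_1,\dots,x_k))$; for a right-hand side $\xi$ (resp. a set $\Gamma$ of right-hand sides), $\xi[x_i]$ (resp. $\Gamma[x_i]$) is the set of states $q'$ such that $q'(x_i)$ occurs in $\xi$ (resp. in some tree of $\Gamma$).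 Domain automaton of $T$: the top-down tree automaton (transducer over $\Sigma$ with rules of the form $p(a(x_1,\dots,x_k))\to a(p_1(x_1),\dots,p_k(x_k))$) with states all subsets of $Q$, initial state $\{q_0\}$, rules $S(a(x_1,\dots,x_k))\to a(S_1(x_1),\dots,S_k(x_k))$ for every $a\in\Sigma_k$, nonempty $S=\{q_1,\dots,q_n\}\subseteq Q$ and nonempty $\Gamma_j\subseteq\text{rhs}_T(q_j,a)$ ($j\in[n]$), where $S_i=\bigcup_j\Gamma_j[x_i]$, and rules $\emptyset(a(x_1,\dots,x_k))\to a(\emptyset(x_1),\dots,\emptyset(x_k))$ for all $a$; for an automaton state $l$, $\text{dom}(l)$ is the set of trees accepted from $l$. Product construction of transducers $T=(Q,\Sigma,\Delta,R,q_0)$ and $T'=(Q',\Delta,\Omega,R',q'_0)$: the transducer with states $Q\times Q'$, initial state $(q_0,q'_0)$, and, for every rule $q(a(x_1,\dots,x_k))\to\xi$ of $T$, every $p\in Q'$ and every tree $\zeta$ derivable from $p(\xi)$ using rules of $T'$ in which the leaves of $\xi$ of the form $q''(x_i)$ are treated as unrewritable symbols and a state $p'$ applied to such a leaf stays as $p'(q''(x_i))$, the rule $(q,p)(a(x_1,\dots,x_k))\to\zeta'$ (said to be obtained from the rule $q(a(x_1,\dots,x_k))\to\xi$ by translating $\xi$ with $p$), where $\zeta'$ replaces each $p'(q''(x_i))$ by $(q'',p')(x_i)$. A top-down tree transducer with look-ahead is a tuple $(Q,\Sigma,\Delta,R,q_0,B)$ where $B$ is a top-down tree automaton over $\Sigma$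 with state set $L$ and rules have the form $q(a(x_1\!:\!l_1,\dots,x_k\!:\!l_k))\to t$ with $l_i\in L$; on input $s$, each node $v$ with label $a\in\Sigma_k$ is first relabeled by $\langle a,l_1,\dots,l_k\rangle$ where $l_i\in L$ are such that the $i$-th subtree of $v$ is in $\text{dom}(l_i)$, and the relabeled tree is then processed reading each rule as $q(\langle a,l_1,\dots,l_k\rangle(x_1,\dots,x_k))\to t$; a state produces $r$ on input $s$ if $r$ is obtainable this way starting from that state. Construction of $M$: let $\hat{T}_1$ be the product construction of $T_1$ and the domain automaton of $T_2$ (states written $(q,S)$ with $q\in Q_1$, $S\subseteq Q_2$), and $N$ the product construction of $\hat{T}_1$ and $T_2$ (states written $(q,S,q')$). The states of $M$ are the $(q,S,q')$ with $q'\in S$; its initial state is $(q_1^0,\{q_2^0\},q_2^0)$; its look-ahead automaton is the domain automaton $\hat{A}$ of $\hat{T}_1$. For every rule $(q,S,q')(a(x_1,\dots,x_k))\to\gamma$ of $N$ involving only such states, obtained from the rule $(q,S)(a(x_1,\dots,x_k))\to\xi$ of $\hat{T}_1$ by translating $\xi$ with $q'$, and for all states $l_1,\dots,l_k$ of $\hat{A}$ with $\xi[x_i]\subseteq l_i$ ($i\in[k]$), $M$ has the rule $(q,S,q')(a(x_1\!:\!l_1,\dots,x_k\!:\!l_k))\to\gamma$. *)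

From Stdlib Require Import Relations.
From Stdlib Require List.
From mathcomp Require Import all_boot.
Set Implicit Arguments. Unset Strict Implicit. Unset Printing Implicit Defensive.

Inductive tree (A : Type) : Type := Node : A -> seq (tree A) -> tree A.
Arguments Node {A}.

Fixpoint tmap A B (f : A -> B) (t : tree A) : tree B :=
  match t with Node a ts => Node (f a) (map (tmap f) ts) end.

(** [t] is a tree over the ranked alphabet (A, rk), i.e. t \in T_A. *)
Fixpoint wr A (rk : A -> nat) (t : tree A) : bool :=
  match t with Node a ts => (size ts == rk a) && all (wr rk) ts end.

(** Right-hand sides: trees over D whose leaves may also be q'(x_i),
    encoded as a childless node labelled [inr (q', i)].
    Variables are 0-indexed: x_1,...,x_k are i = 0,...,k-1. *)
Fixpoint wf_rhs Q D (rk : D -> nat) (k : nat) (xi : tree (D + Q * nat)) : bool :=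
  match xi with
  | Node (inl d) ts => (size ts == rk d) && all (wf_rhs rk k) ts
  | Node (inr (_, i)) ts => (i < k) && (size ts == 0)
  end.

(** The pairs (q', i) such that q'(x_i) occurs in xi;  q' \in xi[x_i]
    iff List.In (q', i) (vars xi). *)
Fixpoint vars Q D (xi : tree (D + Q * nat)) : seq (Q * nat) :=
  match xi with
  | Node (inl _) ts => flatten (map (@vars Q D) ts)
  | Node (inr qi) _ => [:: qi]
  end.

(** Rule set of a transducer with states Q, input Sg, output D:
    [R q a xi] means  q(a(x_1,...,x_k)) -> xi  is a rule (k = rank a). *)
Definition rules (Q Sg D : Type) := Q -> Sg -> tree (D + Q * nat) -> Prop.

Definition rules_of Q Sg D (R : seq (Q * Sg * tree (D + Q * nat))) : rules Q Sg D :=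
  fun q a xi => List.In (q, a, xi) R.

Definition wf_td Q Sg D (rkS : Sg -> nat) (rkD : D -> nat)
  (R : seq (Q * Sg * tree (D + Q * nat))) : Prop :=
  forall q a xi, List.In (q, a, xi) R -> wf_rhs rkD (rkS a) xi.

(** Sentential forms: trees over output symbols, unary state symbols and
    input symbols. *)
Inductive sf (Q Sg D : Type) := SOut of D | SSt of Q | SIn of Sg.
Arguments SOut {Q Sg D}. Arguments SSt {Q Sg D}. Arguments SIn {Q Sg D}.

Fixpoint inst Q Sg D (ss : seq (tree Sg)) (xi : tree (D + Q * nat))
  : tree (sf Q Sg D) :=
  match xi with
  | Node (inl d) ts => Node (SOut d) (map (inst ss) ts)
  | Node (inr (q, i)) _ =>
      Node (SSt q) (take 1 (drop i (map (tmap SIn) ss)))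
  end.

Inductive step Q Sg D (R : rules Q Sg D) : tree (sf Q Sg D) -> tree (sf Q Sg D) -> Prop :=
| step_root q a (ss : seq (tree Sg)) xi :
    R q a xi ->
    step R (Node (SSt q) [:: Node (SIn a) (map (tmap SIn) ss)]) (inst ss xi)
| step_ctx l ts1 t t' ts2 :
    step R t t' -> step R (Node l (ts1 ++ t :: ts2)) (Node l (ts1 ++ t' :: ts2)).

Definition produces Q Sg D (R : rules Q Sg D) (q : Q) (s : tree Sg) (t : tree D) : Prop :=
  clos_refl_trans _ (step R) (Node (SSt q) [:: tmap SIn s]) (tmap SOut t).

Definition dom_aut (Q : finType) (Sg D : Type) (rk : Sg -> nat) (R : rules Q Sg D)
  : rules {set Q} Sg Sg :=
  fun P a xi =>
    exists f : nat -> {set Q},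
      xi = Node (inl a) (mkseq (fun i => Node (inr (f i, i)) [::]) (rk a)) /\
      (if P == set0 then forall i, i < rk a -> f i = set0
       else exists G : Q -> tree (D + Q * nat) -> Prop,
         (forall q, q \in P -> (exists x, G q x) /\ (forall x, G q x -> R q a x)) /\
         (forall i, i < rk a -> forall q',
            q' \in f i <-> exists q x, [/\ q \in P, G q x & List.In (q', i) (vars x)])).

(** Acceptance by a top-down automaton (seen as a transducer): dom(l). *)
Definition accepts (L Sg : Type) (A : rules L Sg Sg) (l : L) (s : tree Sg) : Prop :=
  produces A l s s.

(** Product construction. T' reads trees over D + Q*nat where the leaves
    q''(x_i) are unrewritable (no rules). *)
Definition lift Q Q' D O (R' : rules Q' D O) : rules Q' (D + Q * nat) O :=
  fun p x chi => match x with inl d => R' p d chi | inr _ => False end.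

Fixpoint leafvars A B (t : tree (A + B)) : bool :=
  match t with
  | Node (inl _) ts => all (@leafvars A B) ts
  | Node (inr _) ts => size ts == 0
  end.

(** zeta' viewed as the final sentential form zeta: (q'',p')(x_i) is p'(q''(x_i)). *)
Fixpoint emb_mixed Q Q' D O (z : tree (O + (Q * Q') * nat))
  : tree (sf Q' (D + Q * nat) O) :=
  match z with
  | Node (inl o) ts => Node (SOut o) (map (@emb_mixed Q Q' D O) ts)
  | Node (inr ((q, p), i)) _ => Node (SSt p) [:: Node (SIn (inr (q, i))) [::]]
  end.

Definition translate Q Q' D O (R' : rules Q' D O) (p : Q') (xi : tree (D + Q * nat))
  (z : tree (O + (Q * Q') * nat)) : Prop :=
  leafvars z /\
  clos_refl_trans _ (step (@lift Q Q' D O R')) (Node (SSt p) [:: tmap SIn xi]) (@emb_mixed Q Q' D O z).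

Definition product Q Q' Sg D O (R : rules Q Sg D) (R' : rules Q' D O)
  : rules (Q * Q') Sg O :=
  fun qp a z => exists xi, R qp.1 a xi /\ translate R' qp.2 xi z.

(** Top-down transducers with look-ahead: rules q(a(x_1:l_1,...,x_k:l_k)) -> t
    are [RL q a [:: l_1; ...; l_k] t]. *)
Definition la_rules (Q Sg D L : Type) := Q -> Sg -> seq L -> tree (D + Q * nat) -> Prop.

Inductive relab (Sg L : Type) (dom : L -> tree Sg -> Prop) : tree Sg -> tree (Sg * seq L) -> Prop :=
| relab_node a ss ls ss' :
    List.Forall2 dom ls ss -> List.Forall2 (relab dom) ss ss' ->
    relab dom (Node a ss) (Node (a, ls) ss').

Definition la_produces Q Sg D L (RL : la_rules Q Sg D L) (dom : L -> tree Sg -> Prop)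
  (q : Q) (s : tree Sg) (r : tree D) : Prop :=
  exists s', relab dom s s' /\ produces (fun q x xi => RL q x.1 x.2 xi) q s' r.

Section Construction.
Variables (Sg De Om : Type) (rkS : Sg -> nat) (rkD : De -> nat).
Variables (Q1 Q2 : finType) (R1 : rules Q1 Sg De) (R2 : rules Q2 De Om).

Definition That1 : rules (Q1 * {set Q2}) Sg De := product R1 (dom_aut rkD R2).

Definition Nrules : rules ((Q1 * {set Q2}) * Q2) Sg Om := product That1 R2.

Definition Mla : rules {set (Q1 * {set Q2})} Sg Sg := dom_aut rkS That1.

Definition Mstate (st : (Q1 * {set Q2}) * Q2) : bool := st.2 \in st.1.2.

Definition Mrules : la_rules ((Q1 * {set Q2}) * Q2) Sg Om {set (Q1 * {set Q2})} :=
  fun st a ls g =>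
    [/\ Mstate st,
        (forall st' i, List.In (st', i) (vars g) -> Mstate st') &
        exists xi, [/\ That1 st.1 a xi, translate R2 st.2 xi g,
                       size ls = rkS a &
                       forall i, i < rkS a -> forall st',
                         List.In (st', i) (vars xi) -> st' \in nth set0 ls i]].

Definition M_produces (st : (Q1 * {set Q2}) * Q2) (s : tree Sg) (r : tree Om) : Prop :=
  la_produces Mrules (accepts Mla) st s r.
End Construction.

(* The derivation of t from (q1,S) on s uses a rule of T̂1 at every node of s,
   and the derivation of r from q2 on t runs T2 through the output of each of
   these rules; translating a rule with the current state of T2 gives a rule of
   N. It is a rule of M only if every state (q,S',p) that it calls has p ∈ S',
   which may fail: S' only lists states of T2 having some output on the subtree.
   But a state of the domain automaton may always be enlarged by states that
   have an output, so the derivation of t can be saturated, adding to each S'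
   the states of T2 that are actually run there. The look-ahead labels every
   subtree with the set of states of T̂1 having an output on it; the domain
   automaton of T̂1 accepts the subtree from that set, which contains every
   state called on it. *)
From Pilot Require Import Defs.
From Stdlib Require Import Relations.
From Stdlib Require List.
From mathcomp Require Import all_boot boolp.
Set Implicit Arguments. Unset Strict Implicit. Unset Printing Implicit Defensive.

Definition tree_ind_In (A : Type) (P : tree A -> Prop)
    (IH : forall a ts, (forall t, List.In t ts -> P t) -> P (Node a ts)) :
  forall t, P t :=
  fix F t := match t with Node a ts => IH a ts
    ((fix G (ts : seq (tree A)) : forall t, List.In t ts -> P t :=
       match ts with
       | [::] => fun t (h : List.In t [::]) => False_ind _ h
       | t0 :: ts' => fun t (h : List.In t (t0 :: ts')) =>
           match h with
           | or_introl e => eq_ind t0 P (F t0) t e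
           | or_intror h' => G ts' t h'
           end
       end) ts) end.

Lemma all_In (T : Type) (p : T -> bool) s x : all p s -> List.In x s -> p x.
Proof. by elim: s => [|y s IH] //= /andP[py ps] [<-|]; last exact: IH. Qed.

Lemma In_nth (T : Type) (x0 : T) s i : i < size s -> List.In (nth x0 s i) s.
Proof. by elim: s i => [|y s IH] [|i] //= lt_is; [left | right; apply: IH]. Qed.

Lemma in_flatten_In (T : Type) (x : T) (ss : seq (seq T)) :
  List.In x (flatten ss) -> exists2 s, List.In s ss & List.In x s.
Proof.
elim: ss => [|s ss IH] //= /List.in_app_iff[xs|/IH[s' s's xs']].
  by exists s; first left.
by exists s'; first right.
Qed.

Lemma bounded_choice (C : Type) (P : nat -> C -> Prop) n :
  (forall i, i < n -> exists c, P i c) ->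
  exists2 cs, size cs = n & forall c0 i, i < n -> P i (nth c0 cs i).
Proof.
elim: n P => [|n IH] P exP; first by exists [::].
have [c Pc] := exP 0 erefl.
have [cs size_cs Pcs] := IH (fun i => P i.+1) (fun i => exP i.+1).
by exists (c :: cs) => [|c0 [|i]] /=; rewrite ?size_cs //; apply: Pcs.
Qed.

(** The subterm [take 1 (drop i s)] of [inst] selects the [i]-th child, if any. *)
Section ChildSelection.
Variables (T : Type) (s : seq T) (i : nat).

Lemma take1_drop_nth x0 : i < size s -> take 1 (drop i s) = [:: nth x0 s i].
Proof. by move=> lt_is; rewrite (drop_nth x0 lt_is) /= take0. Qed.

Lemma take1_dropP : take 1 (drop i s) = [::] \/ exists x, take 1 (drop i s) = [:: x].
Proof. by case: (drop i s) => [|x l]; [left | right; exists x; rewrite /= take0]. Qed.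

Lemma take1_drop_inv x : take 1 (drop i s) = [:: x] ->
  [/\ List.In x s, i < size s & forall x0, nth x0 s i = x].
Proof.
case: (ltnP i (size s)) => [lt_is | le_si]; last by rewrite drop_oversize.
have nth_x x0 : take 1 (drop i s) = [:: x] -> nth x0 s i = x.
  by rewrite (take1_drop_nth x0 lt_is) => -[].
by move=> Ex; split=> // [|x0]; [rewrite -(nth_x x Ex); apply: In_nth | apply: nth_x].
Qed.
End ChildSelection.

Section Forall2Facts.
Variables (A B : Type).

Lemma Forall2_cat (R : A -> B -> Prop) (l1 l2 : seq A) (l1' l2' : seq B) :
  List.Forall2 R l1 l1' -> List.Forall2 R l2 l2' ->
  List.Forall2 R (l1 ++ l2) (l1' ++ l2').
Proof. by elim=> [|x y l l' Rxy _ IH] //= ?; constructor; last exact: IH. Qed.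

Lemma Forall2_cat_inv (R : A -> B -> Prop) l1 x l2 (l' : seq B) :
  List.Forall2 R (l1 ++ x :: l2) l' ->
  exists l1' y l2', [/\ l' = l1' ++ y :: l2', List.Forall2 R l1 l1', R x y
                      & List.Forall2 R l2 l2'].
Proof.
elim: l1 l' => [|a l1 IH] l' /= F; inversion F as [|? y ? l'' Ry F']; subst.
  by exists [::], y, l''.
have [l1' [z [l2' [-> F1 Rz F2]]]] := IH _ F'.
by exists (y :: l1'), z, l2'; split=> //; constructor.
Qed.

Lemma Forall2_nthP (R : A -> B -> Prop) (l : seq A) (l' : seq B) :
  List.Forall2 R l l' <->
  size l = size l' /\ forall x0 y0 i, i < size l -> R (nth x0 l i) (nth y0 l' i).
Proof.
split.
  elim=> [|x y l1 l1' Rxy _ [size_l IH]] //=.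
  by split=> [|x0 y0 [|i]] //=; [rewrite size_l | exact: IH].
elim: l l' => [|x l IH] [|y l'] [//= size_l Rnth]; constructor.
- exact: (Rnth x y 0).
- by apply: IH; split=> [|x0 y0 i]; [case: size_l | apply: (Rnth x0 y0 i.+1)].
Qed.

Lemma Forall2_impl_In (R1 R2 : A -> B -> Prop) (l : seq A) (l' : seq B) :
  List.Forall2 R1 l l' ->
  (forall x y, List.In x l -> R1 x y -> R2 x y) -> List.Forall2 R2 l l'.
Proof.
elim=> [|x y l1 l1' R1xy _ IH] R12; constructor; first by apply: R12; first left.
by apply: IH => a b ?; apply: R12; right.
Qed.

Lemma Forall2_In_l (R : A -> B -> Prop) (l : seq A) (l' : seq B) x :
  List.Forall2 R l l' -> List.In x l -> exists2 y, List.In y l' & R x y.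
Proof.
elim=> [|a b l1 l1' Rab _ IH] //= [<-|/IH[y ? ?]]; first by exists b; first left.
by exists y; first right.
Qed.

Lemma Forall2_factor (C : Type) (R : A -> B -> Prop) (R1 : A -> C -> Prop)
    (R2 : C -> B -> Prop) l l' :
  List.Forall2 R l l' ->
  (forall x y, List.In x l -> R x y -> exists2 c, R1 x c & R2 c y) ->
  exists2 cs, List.Forall2 R1 l cs & List.Forall2 R2 cs l'.
Proof.
elim=> [|x y l1 l1' Rxy _ IH] fact; first by exists [::].
have [c R1c R2c] := fact x y (or_introl erefl) Rxy.
have [cs R1cs R2cs] := IH (fun a b ha => fact a b (or_intror ha)).
by exists (c :: cs); constructor.
Qed.
End Forall2Facts.

Lemma Forall2_map_l (A B C : Type) (f : A -> C) (R : C -> B -> Prop) l l' :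
  List.Forall2 R (map f l) l' <-> List.Forall2 (fun x y => R (f x) y) l l'.
Proof.
split; last by elim=> //= *; constructor.
by elim: l l' => [|x l IH] l' F; inversion F; subst; constructor; last exact: IH.
Qed.

Lemma Forall2_map_r (A B C : Type) (f : B -> C) (R : A -> C -> Prop) l l' :
  List.Forall2 R l (map f l') <-> List.Forall2 (fun x y => R x (f y)) l l'.
Proof.
split; last by elim=> //= *; constructor.
by elim: l' l => [|y l' IH] l F; inversion F; subst; constructor; last exact: IH.
Qed.

Lemma Forall2_diag (A : Type) (R : A -> A -> Prop) l :
  (forall x, List.In x l -> R x x) -> List.Forall2 R l l.
Proof.
elim: l => [|x l IH] Rl; constructor; first by apply: Rl; left.
by apply: IH => y ?; apply: Rl; right.
Qed.

Section Derivations.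
Variables (Q Sg D : Type) (R : rules Q Sg D).
Local Notation form := (tree (sf Q Sg D)).
Local Notation steps := (clos_refl_trans _ (step R)).

Inductive derives : form -> form -> Prop :=
| derives_node l ts ts' :
    List.Forall2 derives ts ts' -> derives (Node l ts) (Node l ts')
| derives_rule q a ss xi Y : R q a xi -> derives (inst ss xi) Y ->
    derives (Node (SSt q) [:: Node (SIn a) (map (tmap SIn) ss)]) Y.

Fixpoint derives_ind_nested (P : form -> form -> Prop)
  (Pnode : forall l ts ts', List.Forall2 derives ts ts' -> List.Forall2 P ts ts' ->
     P (Node l ts) (Node l ts'))
  (Prule : forall q a ss xi Y, R q a xi -> derives (inst ss xi) Y -> P (inst ss xi) Y ->
     P (Node (SSt q) [:: Node (SIn a) (map (tmap SIn) ss)]) Y)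
  X Y (dXY : derives X Y) {struct dXY} : P X Y :=
  match dXY with
  | derives_node l ts ts' F => Pnode l ts ts' F
      ((fix G ts ts' (F : List.Forall2 derives ts ts') : List.Forall2 P ts ts' :=
         match F with
         | List.Forall2_nil => List.Forall2_nil _
         | List.Forall2_cons _ _ _ _ d F' =>
             List.Forall2_cons _ _ (derives_ind_nested Pnode Prule d) (G _ _ F')
         end) ts ts' F)
  | derives_rule q a ss xi Y Rxi d =>
      Prule q a ss xi Y Rxi d (derives_ind_nested Pnode Prule d)
  end.

Lemma derives_refl X : derives X X.
Proof.
elim/tree_ind_In: X => l ts IH; constructor.
by apply: Forall2_diag.
Qed.

Lemma step_not_input X X' s : step R X X' -> X' <> tmap SIn s.
Proof.
move=> sXX'; elim: sXX' s => [q a ss xi _|l ts1 u u' ts2 _ IH] [b bs] //=.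
  by case: xi => [[d|[q' i]] ?].
case=> _ E; have : List.In u' (map (tmap SIn) bs).
  by rewrite -E; apply/List.in_app_iff; right; left.
by case/List.in_map_iff=> s' [Es' _]; apply: (IH s'); rewrite Es'.
Qed.

(** A step cannot take place below a rule redex, whose children are input
    trees: no step produces an input tree. *)
Lemma step_derives X X' Y : step R X X' -> derives X' Y -> derives X Y.
Proof.
move=> sXX'; elim: sXX' Y => [q a ss xi Rxi|l ts1 u u' ts2 suu' IH] Y dX'Y.
  exact: derives_rule Rxi dX'Y.
move E: (Node l _) dX'Y => X1 dX1Y.
case: X1 Y / dX1Y E => [l0 ts ts' F [-> Ets]|q0 a0 ss0 xi0 Y0 _ _ [_]].
  rewrite -Ets in F; have [ys1 [y [ys2 [-> F1 du'y F2]]]] := Forall2_cat_inv F.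
  by constructor; apply: (Forall2_cat F1); constructor => //; apply: IH.
case: ts1 => [|v [|? ?]] //= [E _].
by case: (step_not_input (s := Node a0 ss0) suu').
Qed.

Lemma steps_ctx l ts1 t t' ts2 : steps t t' ->
  steps (Node l (ts1 ++ t :: ts2)) (Node l (ts1 ++ t' :: ts2)).
Proof.
elim=> [x y sxy|x|x y z _ sxy _ syz]; last exact: rt_trans sxy syz.
  by apply: rt_step; constructor.
exact: rt_refl.
Qed.

Lemma steps_children l ts ts' ts1 : List.Forall2 steps ts ts' ->
  steps (Node l (ts1 ++ ts)) (Node l (ts1 ++ ts')).
Proof.
move=> F; elim: F ts1 => [|t t' ts2 ts2' stt' _ IH] ts1; first exact: rt_refl.
apply: rt_trans (steps_ctx l ts1 ts2 stt') _.
by have := IH (rcons ts1 t'); rewrite -!cats1 -!catA.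
Qed.

Lemma derivesE X Y : derives X Y <-> steps X Y.
Proof.
split.
  elim/derives_ind_nested => [l ts ts' _ F|q a ss xi Y' Rxi _ IH].
    exact: (steps_children l [::] F).
  by apply: rt_trans IH; apply: rt_step; apply: step_root.
move/clos_rt_rt1n_iff; elim=> [x|x y z sxy _ IH]; first exact: derives_refl.
exact: step_derives sxy IH.
Qed.

Lemma tmap_SIn_inj : injective (@tmap Sg (sf Q Sg D) SIn).
Proof.
elim/tree_ind_In => a ts IH [b bs] /= [<-] E; congr Node.
elim: ts bs IH E => [|t ts IHts] [|b' bs] //= IH [E1 E2].
rewrite (IH t (or_introl erefl) _ E1); congr cons.
by apply: IHts => // u hu; apply: IH; right.
Qed.

Lemma derives_input s Y : derives (tmap SIn s) Y -> Y = tmap SIn s.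
Proof.
elim/tree_ind_In: s Y => a ts IH Y /= d.
inversion d as [l ts0 ts' F|]; subst; congr Node.
move: F IH; rewrite Forall2_map_l.
elim=> [|x y l l' dxy _ IHl] //= IH.
rewrite (IH x (or_introl erefl) _ dxy); congr cons.
by apply: IHl => u hu; apply: IH; right.
Qed.

Lemma derives_outV o ts Y : derives (Node (SOut o) ts) Y ->
  exists2 ys, Y = Node (SOut o) ys & List.Forall2 derives ts ys.
Proof. by move=> d; inversion d; subst; exists ts'. Qed.

Lemma derives_leafV q Y : derives (Node (SSt q) [::]) Y -> Y = Node (SSt q) [::].
Proof. by move=> d; inversion d as [l ts ts' F|]; subst; inversion F. Qed.

Lemma derives_stateP q s Y : derives (Node (SSt q) [:: tmap SIn s]) Y ->
  Y = Node (SSt q) [:: tmap SIn s] \/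
  exists a ss xi, [/\ s = Node a ss, R q a xi & derives (inst ss xi) Y].
Proof.
move=> d; inversion d as [l ts ts' F|q0 a ss xi Y0 Rxi d']; subst.
  left; inversion F as [|x y l l' dxy F']; inversion F'; subst.
  by rewrite (derives_input dxy).
by right; exists a, ss, xi; split=> //; apply: tmap_SIn_inj.
Qed.

End Derivations.

Inductive rhs_inst (O X V : Type) (emb : O -> X) (P : V -> nat -> tree X -> Prop)
  : tree (O + V * nat) -> tree X -> Prop :=
| rhs_inst_out o xs ys :
    List.Forall2 (rhs_inst emb P) xs ys -> rhs_inst emb P (Node (inl o) xs) (Node (emb o) ys)
| rhs_inst_var v i xs y : P v i y -> rhs_inst emb P (Node (inr (v, i)) xs) y.

Section RhsInstances.
Variables (O X V : Type) (emb : O -> X).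
Implicit Types (P : V -> nat -> tree X -> Prop) (xi : tree (O + V * nat)).

Lemma rhs_inst_vars P xi y v i :
  rhs_inst emb P xi y -> List.In (v, i) (vars xi) -> exists y', P v i y'.
Proof.
elim/tree_ind_In: xi y => [[o|[w j]] xs IH] y yxi;
  inversion yxi as [o0 xs0 ys F|v0 i0 xs0 y0 Py]; subst => /=; last first.
  by case=> // -[<- <-]; exists y.
move=> vin; have [_ /List.in_map_iff[x [<- xxs]] vix] := in_flatten_In vin.
by have [y' _ /IH] := Forall2_In_l F xxs; apply.
Qed.

Lemma In_vars_child o (xs : seq (tree (O + V * nat))) x vi :
  List.In x xs -> List.In vi (vars x) -> List.In vi (vars (Node (inl o) xs)).
Proof.
move=> + vix; elim: xs => [|x0 xs IH] //= [->|xxs];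
  apply/List.in_app_iff; [by left | by right; apply: IH].
Qed.

Lemma rhs_inst_impl P P' xi y : rhs_inst emb P xi y ->
  (forall v i y', List.In (v, i) (vars xi) -> P v i y' -> P' v i y') -> rhs_inst emb P' xi y.
Proof.
elim/tree_ind_In: xi y => [[o|[w j]] xs IH] y yxi PP';
  inversion yxi as [o0 xs0 ys F|v0 i0 xs0 y0 Py]; subst; constructor; last first.
  by apply: PP'; first left.
apply: (Forall2_impl_In F) => x y' xxs y'x; apply: (IH x xxs _ y'x) => v i y1 vix.
exact: PP' (In_vars_child o xxs vix).
Qed.
End RhsInstances.

Lemma rhs_inst_bind (O V W : Type) (P : V -> nat -> tree O -> Prop)
    (Phi : V -> nat -> tree (O + W * nat) -> Prop) (P' : W -> nat -> tree O -> Prop) xi r :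
  rhs_inst id P xi r ->
  (forall v i r', P v i r' -> exists2 g', Phi v i g' & leafvars g' /\ rhs_inst id P' g' r') ->
  exists2 g, rhs_inst inl Phi xi g & leafvars g /\ rhs_inst id P' g r.
Proof.
elim/tree_ind_In: xi r => [[o|[v j]] xs IH] r rxi bind;
  inversion rxi as [o0 xs0 ys F|v0 i0 xs0 y0 Pr]; subst; last first.
  by have [g' ? ?] := bind _ _ _ Pr; exists g'; first constructor.
have [|gs F1 F2] := Forall2_factor
  (R1 := fun x g => rhs_inst inl Phi x g /\ leafvars g) (R2 := rhs_inst id P') F.
  by move=> x y xxs yx; have [g ? [? ?]] := IH x xxs y yx bind; exists g.
exists (Node (inl o) gs); first by constructor; apply: (Forall2_impl_In F1) => ? ? _ [].
split; last by constructor.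
by elim: F1 {F2} => //= x g ? ? [_ ->].
Qed.

(** [E] will be [tmap SOut] for runs and [emb_mixed] for translations. *)
Section InstDerivations.
Variables (Q Sg O X : Type) (R : rules Q Sg O) (emb : O -> X)
  (E : tree X -> tree (sf Q Sg O)).
Hypothesis E_out : forall o ys, E (Node (emb o) ys) = Node (SOut o) (map E ys).
Hypothesis E_outV : forall y o us, E y = Node (SOut o) us -> exists ys, y = Node (emb o) ys.
Hypothesis E_not_leaf : forall y q, E y <> Node (SSt q) [::].

Definition child_derives (ss : seq (tree Sg)) (q : Q) (i : nat) (y : tree X) : Prop :=
  exists2 si, take 1 (drop i ss) = [:: si] & derives R (Node (SSt q) [:: tmap SIn si]) (E y).

Lemma derives_instP ss xi y :
  derives R (inst ss xi) (E y) <-> rhs_inst emb (child_derives ss) xi y.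
Proof.
elim/tree_ind_In: xi y => [[o|[q i]] xs IH] y /=; split.
- move=> d; have [us Ey F] := derives_outV d; have [ys ?] := E_outV Ey; subst y.
  move: Ey F; rewrite E_out => -[<-]; rewrite Forall2_map_l Forall2_map_r => F.
  constructor.
  by apply: (Forall2_impl_In F) => x y' /IH/[apply].
- move=> yxi; inversion yxi as [o0 xs0 ys F|]; subst; rewrite E_out; constructor.
  rewrite Forall2_map_l Forall2_map_r.
  by apply: (Forall2_impl_In F) => x y' /IH/[apply].
- rewrite -map_drop -map_take; case: (take1_dropP ss i) => [->|[si Esi]] d.
    by case: (E_not_leaf (derives_leafV d)).
  by constructor; exists si; rewrite Esi in d.
- move=> yxi; inversion yxi as [|v0 i0 xs0 y0 [si Esi d]]; subst.
  by rewrite -map_drop -map_take Esi.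
Qed.
End InstDerivations.

Section Runs.
Variables (Q Sg O : Type) (R : rules Q Sg O).

Definition runs (q : Q) (s : tree Sg) (t : tree O) : Prop :=
  derives R (Node (SSt q) [:: tmap SIn s]) (tmap SOut t).

Lemma runsE q s t : produces R q s t <-> runs q s t.
Proof. exact: iff_sym (derivesE _ _ _). Qed.

Lemma runs_nodeP q a ss t : runs q (Node a ss) t <->
  exists2 xi, R q a xi & rhs_inst id (child_derives R (tmap SOut) ss) xi t.
Proof.
have E_outV (y : tree O) o us :
    tmap SOut y = Node (@SOut Q Sg O o) us -> exists ys, y = Node o ys.
  by case: y => o' ys /= [-> _]; exists ys.
have E_not_leaf (y : tree O) q' : tmap SOut y <> Node (@SSt Q Sg O q') [::].
  by case: y.
have instP := derives_instP R (fun o ys => erefl) E_outV E_not_leaf.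
rewrite /runs; split=> [|[xi Rxi /instP]]; last exact: derives_rule Rxi.
move=> d; case: (derives_stateP d) => [|[a' [ss' [xi [[<- <-] Rxi /instP]]]]].
  by case: t d.
by exists xi.
Qed.
End Runs.

Notation child_runs R ss := (child_derives R (tmap SOut) ss).

Section Translation.
Variables (Q Q' D O : Type) (R' : rules Q' D O).
Local Notation lifted := (@Defs.lift Q Q' D O R').
Local Notation emb := (@emb_mixed Q Q' D O).

Definition transl (p : Q') (xi : tree (D + Q * nat)) (z : tree (O + (Q * Q') * nat)) :=
  derives lifted (Node (SSt p) [:: tmap SIn xi]) (emb z).

Lemma translateE p xi z : translate R' p xi z <-> leafvars z /\ transl p xi z.
Proof. by rewrite /translate /transl derivesE. Qed.

Lemma transl_outP p d xs z : transl p (Node (inl d) xs) z <->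
  exists2 chi, R' p d chi & rhs_inst inl (child_derives lifted emb xs) chi z.
Proof.
have emb_outV y o (us : seq (tree (sf Q' (D + Q * nat) O))) :
    emb y = Node (SOut o) us -> exists ys, y = Node (inl o) ys.
  by case: y => [[o'|[[q p'] i]] ys] //= [-> _]; exists ys.
have emb_not_leaf y (p0 : Q') : emb y <> Node (@SSt _ (D + Q * nat) O p0) [::].
  by case: y => [[o'|[[q' p'] i]] ys].
have instP :=
  derives_instP lifted (emb := inl) (E := emb) (fun o ys => erefl) emb_outV emb_not_leaf.
rewrite /transl; split=> [|[chi Rchi /instP]]; last exact: (derives_rule (a := inl d)) Rchi.
move=> d'; case: (derives_stateP d') => [|[a [ss [xi [[<- <-] Rxi /instP]]]]].
  by case: z d' => [[o'|[[q' p'] i]] ys].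
by exists xi.
Qed.

Lemma transl_varV p q i ys z : transl p (Node (inr (q, i)) ys) z ->
  ys = [::] /\ exists zs, z = Node (inr ((q, p), i)) zs.
Proof.
move=> d; case: (derives_stateP d) => [|[a [ss [xi [[<- _] []]]]]].
case: z {d} => [[o'|[[q' p'] i']] zs] //= [-> -> ->].
by case: ys => // _; split=> //; exists zs.
Qed.

Lemma transl_out_bind (P : Q' -> nat -> tree O -> Prop) (P' : Q * Q' -> nat -> tree O -> Prop)
    p d zs chi r :
  R' p d chi -> rhs_inst id P chi r ->
  (forall v i r', P v i r' ->
     exists2 g', child_derives lifted emb zs v i g' & leafvars g' /\ rhs_inst id P' g' r') ->
  exists2 g, transl p (Node (inl d) zs) g & leafvars g /\ rhs_inst id P' g r.
Proof.
move=> Rchi rchi /(rhs_inst_bind rchi)[g gchi gr]; exists g => //.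
by apply/transl_outP; exists chi.
Qed.
End Translation.

Section DomainAutomaton.
Variables (Q : finType) (Sg D : Type) (rk : Sg -> nat) (R : rules Q Sg D).
Implicit Types (P : {set Q}) (ss : seq (tree Sg)).

Definition dom_rhs (a : Sg) (f : nat -> {set Q}) : tree (Sg + {set Q} * nat) :=
  Node (inl a) (mkseq (fun i => Node (inr (f i, i)) [::]) (rk a)).

(** The side condition of a rule of [dom_aut] with children states [f], stated
    uniformly in [P]: for [P = set0] the only choice is [G] empty. *)
Definition dom_choice (P : {set Q}) (a : Sg) (f : nat -> {set Q}) : Prop :=
  exists G : Q -> tree (D + Q * nat) -> Prop,
    (forall q, q \in P -> (exists x, G q x) /\ (forall x, G q x -> R q a x)) /\
    (forall i, i < rk a -> forall q',
        q' \in f i <-> exists q x, [/\ q \in P, G q x & List.In (q', i) (vars x)]).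

Lemma dom_autP P a xi :
  dom_aut rk R P a xi <-> exists2 f, xi = dom_rhs a f & dom_choice P a f.
Proof.
split=> [[f [-> fP]]|[f -> [G [GP Gf]]]].
  exists f => //; case: eqP fP => [-> f0|_ //]; exists (fun _ _ => False).
  split=> [q|i lt_i q']; first by rewrite in_set0.
  by rewrite f0 // in_set0; split=> // -[q [x []]].
exists f; split=> //; case: eqP => [P0 i lt_i|_]; last by exists G.
apply/setP => q'; rewrite in_set0; apply/negP => /(Gf i lt_i)[q [x []]].
by rewrite P0 in_set0.
Qed.

Lemma dom_choice_setU P P' a f f' : dom_choice P a f -> dom_choice P' a f' ->
  dom_choice (P :|: P') a (fun i => f i :|: f' i).
Proof.
move=> [G [GP Gf]] [G' [GP' Gf']].
exists (fun q x => q \in P /\ G q x \/ q \in P' /\ G' q x); split.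
  move=> q Pq; split; last by move=> x [[/GP[_ GR] /GR]|[/GP'[_ GR] /GR]].
  case/setUP: Pq => Pq.
  - by have [[x ?] _] := GP q Pq; exists x; left.
  - by have [[x ?] _] := GP' q Pq; exists x; right.
move=> i lt_i q'; rewrite in_setU; split.
  case/orP=> [/(Gf i lt_i) | /(Gf' i lt_i)] [q [x [Pq Gx vx]]];
    exists q, x; rewrite in_setU Pq ?orbT; split=> //; by [left | right].
case=> q [x [_ [[Pq Gx]|[Pq Gx]] vx]]; apply/orP;
  [left; apply/(Gf i lt_i) | right; apply/(Gf' i lt_i)]; by exists q, x.
Qed.

Definition productive a ss q x :=
  R q a x /\ forall q' i, List.In (q', i) (vars x) -> exists t, child_runs R ss q' i t.

Definition next_states (P : {set Q}) a ss i : {set Q} :=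
  [set q' | `[< exists q x, [/\ q \in P, productive a ss q x & List.In (q', i) (vars x)] >]].

Lemma runs_productive q a ss t : runs R q (Node a ss) t ->
  exists2 x, productive a ss q x & rhs_inst id (child_runs R ss) x t.
Proof.
case/runs_nodeP => x Rx tx; exists x => //; split=> // q' i.
exact: rhs_inst_vars tx.
Qed.

Lemma next_states_runs P a ss i q' :
  q' \in next_states P a ss i -> exists t, child_runs R ss q' i t.
Proof. by rewrite inE => /asboolP[q [x [_ [_ prod_x] /prod_x]]]. Qed.

Lemma dom_choice_next_states P a ss :
  (forall q, q \in P -> exists t, runs R q (Node a ss) t) ->
  dom_choice P a (next_states P a ss).
Proof.
move=> runsP; exists (productive a ss); split=> [q /runsP[t /runs_productive[x ? _]]|].
  by split=> [|y []]; first exists x.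
by move=> i _ q'; rewrite inE; split=> /asboolP.
Qed.

Lemma runs_next_states P q a ss t : q \in P -> runs R q (Node a ss) t ->
  exists2 x, R q a x & rhs_inst id (fun q' i t' =>
    child_runs R ss q' i t' /\ q' \in next_states P a ss i) x t.
Proof.
move=> Pq /runs_productive[x prod_x tx]; exists x; first by case: prod_x.
apply: (rhs_inst_impl tx) => q' i t' vx ?; split=> //.
by rewrite inE; apply/asboolP; exists q, x.
Qed.

Lemma dom_aut_accepts s : wr rk s -> forall P,
  (forall q, q \in P -> exists t, runs R q s t) -> runs (dom_aut rk R) P s s.
Proof.
elim/tree_ind_In: s => a ss IH /= /andP[/eqP size_ss wr_ss] P runsP.
apply/runs_nodeP; exists (dom_rhs a (next_states P a ss)).
  by apply/dom_autP; exists (next_states P a ss) => //; apply: dom_choice_next_states.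
rewrite -[Node a ss]/(Node (id a) ss); constructor; apply/Forall2_nthP.
rewrite size_mkseq size_ss; split=> // x0 s0 i lt_i; rewrite nth_mkseq //.
have lt_is : i < size ss by rewrite size_ss.
constructor; exists (nth s0 ss i); first exact: take1_drop_nth.
have ss_i := In_nth s0 lt_is.
apply: (IH _ ss_i (all_In wr_ss ss_i)) => q' /next_states_runs[t [si Esi]].
by have [_ _ /(_ s0) <-] := take1_drop_inv Esi; exists t.
Qed.
End DomainAutomaton.

Section Composition.
Variables (Sg De Om : Type) (rkS : Sg -> nat) (rkD : De -> nat) (Q1 Q2 : finType)
  (R1 : rules Q1 Sg De) (R2 : rules Q2 De Om).
Implicit Types (ss : seq (tree Sg)) (P X : {set Q2}).

Local Notation T1h := (That1 rkD R1 R2).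
Local Notation dom2 := (dom_aut rkD R2).

Definition M_leaf ss (v : (Q1 * {set Q2}) * Q2) (i : nat) (r : tree Om) : Prop :=
  Mstate v /\ exists si t,
    [/\ take 1 (drop i ss) = [:: si], runs T1h v.1 si t & runs R2 v.2 t r].

Definition saturable (s : tree Sg) : Prop := forall q S X t,
  runs T1h (q, S) s t -> (forall p, p \in X -> exists r, runs R2 p t r) ->
  runs T1h (q, S :|: X) s t.

Definition saturated_transl ss xi P X t z :=
  [/\ transl dom2 (P :|: X) xi z, leafvars z, rhs_inst id (child_runs T1h ss) z t &
      forall p r, p \in X -> runs R2 p t r ->
        exists2 g, transl R2 p z g & leafvars g /\ rhs_inst id (M_leaf ss) g r].

Definition saturable_rhs ss xi := forall P z t X,
  transl dom2 P xi z -> rhs_inst id (child_runs T1h ss) z t ->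
  (forall p, p \in X -> exists r, runs R2 p t r) ->
  exists z', saturated_transl ss xi P X t z'.

Lemma saturable_rhs_var ss q i ys : (forall s, List.In s ss -> saturable s) ->
  saturable_rhs ss (Node (inr (q, i)) ys).
Proof.
move=> sat_ss P z t X tr; have [-> [zs ->]] := transl_varV tr; move=> zt runsX.
inversion zt as [|v j xs y [si Esi run_si]]; subst.
have [ss_si _ _] := take1_drop_inv Esi.
exists (Node (inr ((q, P :|: X), i)) [::]); split=> //.
- exact: derives_refl.
- by constructor; exists si => //; apply: sat_ss.
move=> p r Xp run_r; exists (Node (inr (((q, P :|: X), p), i)) [::]).
  exact: derives_refl.
split=> //; constructor; split; first by rewrite /Mstate /= in_setU Xp orbT.
by exists si, t; split=> //; apply: sat_ss.
Qed.

Lemma saturated_transl_out ss d xs P X f ts zs' t0 :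
  dom_choice rkD R2 P d f -> (forall p, p \in X -> exists r, runs R2 p (Node d ts) r) ->
  size ts = rkD d -> size zs' = rkD d ->
  (forall z0 j, j < rkD d -> exists2 xj, take 1 (drop j xs) = [:: xj] &
     saturated_transl ss xj (f j) (next_states R2 X d ts j) (nth t0 ts j) (nth z0 zs' j)) ->
  saturated_transl ss (Node (inl d) xs) P X (Node d ts) (Node (inl d) zs').
Proof.
move=> domf runsX size_ts size_zs' sat_zs'.
pose Y j := next_states R2 X d ts j; pose z0 := Node (inl d) zs'.
split.
- apply/transl_outP; exists (dom_rhs rkD d (fun j => f j :|: Y j)).
    apply/dom_autP; exists (fun j => f j :|: Y j) => //.
    exact: dom_choice_setU domf (dom_choice_next_states rkD runsX).
  constructor; apply/Forall2_nthP; rewrite size_mkseq size_zs'; split=> // x0 z1 j lt_j.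
  rewrite nth_mkseq //; constructor.
  by have [xj Exj [tr_j _ _ _]] := sat_zs' z1 j lt_j; exists xj.
- apply/(all_nthP z0) => j; rewrite size_zs' => lt_j.
  by have [? ? [_ ? _ _]] := sat_zs' z0 j lt_j.
- constructor; apply/Forall2_nthP; rewrite size_zs' size_ts.
  split=> // z1 t1 j lt_j; rewrite (set_nth_default t0) ?size_ts //.
  by have [? ? [_ _ ? _]] := sat_zs' z1 j lt_j.
move=> p r Xp /(runs_next_states Xp)[rho R2rho rho_r].
apply: (transl_out_bind R2rho rho_r) => v j r' [[tj Etj run_r'] Yv].
have [_ lt_j /(_ t0) nth_tj] := take1_drop_inv Etj; rewrite size_ts in lt_j.
have [xj _ [_ _ _ thru]] := sat_zs' z0 j lt_j.
have run_tj : runs R2 v (nth t0 ts j) r' by rewrite nth_tj.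
have [g' tr_g' g'r'] := thru v r' Yv run_tj.
exists g' => //; exists (nth z0 zs' j) => //.
by apply: take1_drop_nth; rewrite size_zs'.
Qed.

(** The children states of the new domain-automaton rule are enlarged by the
    states that the runs of [X] on [t] send to each child. *)
Lemma saturable_rhs_out ss d xs : (forall x, List.In x xs -> saturable_rhs ss x) ->
  saturable_rhs ss (Node (inl d) xs).
Proof.
move=> IH P z t X /transl_outP[_ /dom_autP[f -> domf] zchi] zt runsX.
inversion zchi as [o0 xs0 zs Fz|]; subst; inversion zt as [o1 xs1 ts Ft|]; subst.
move: Fz Ft => /Forall2_nthP[+ Fz] /Forall2_nthP[size_zs Ft].
rewrite size_mkseq => size_d; pose t0 := Node d ts.
have child j : j < rkD d -> exists z'j, exists2 xj, take 1 (drop j xs) = [:: xj] &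
    saturated_transl ss xj (f j) (next_states R2 X d ts j) (nth t0 ts j) z'j.
  move=> lt_j; have := Fz (Node (inr (f j, j)) [::]) (Node (inl d) zs) j.
  rewrite size_mkseq nth_mkseq // => /(_ lt_j) zj.
  inversion zj as [|v i xs' y [xj Exj tr_xj]]; subst.
  have [ss_xj _ _] := take1_drop_inv Exj.
  have runsY p' : p' \in next_states R2 X d ts j -> exists r', runs R2 p' (nth t0 ts j) r'.
    move=> Yp'; have [r' [tj Etj run_r']] := next_states_runs Yp'.
    by have [_ _ /(_ t0) ->] := take1_drop_inv Etj; exists r'.
  have lt_jz : j < size zs by rewrite -size_d.
  have [z'j sat] := IH xj ss_xj (f j) _ _ _ tr_xj (Ft _ t0 j lt_jz) runsY.
  by exists z'j, xj.
have [zs' size_zs' sat_zs'] := bounded_choice child.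
exists (Node (inl d) zs'); apply: (saturated_transl_out (t0 := t0) domf runsX) => //.
by rewrite -size_zs size_d.
Qed.

Lemma saturable_rhs_all ss : (forall s, List.In s ss -> saturable s) ->
  forall xi, saturable_rhs ss xi.
Proof.
move=> sat_ss; elim/tree_ind_In => -[d|[q i]] xs IH.
  exact: saturable_rhs_out.
exact: saturable_rhs_var.
Qed.

Lemma saturable_all s : saturable s.
Proof.
elim/tree_ind_In: s => a ss sat_ss q S X t /runs_nodeP[z [xi [R1xi]]].
move=> /translateE[_ tr] zt runsX.
have [z' [tr' lv' zt' _]] := saturable_rhs_all sat_ss tr zt runsX.
by apply/runs_nodeP; exists z' => //; exists xi; split=> //; apply/translateE.
Qed.

Definition dom_set (s : tree Sg) : {set Q1 * {set Q2}} :=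
  [set x | `[< exists t, runs T1h x s t >]].

Fixpoint dom_relabel (s : tree Sg) : tree (Sg * seq {set Q1 * {set Q2}}) :=
  match s with Node a ss => Node (a, map dom_set ss) (map dom_relabel ss) end.

Lemma relab_dom_relabel s : wr rkS s ->
  relab (accepts (Mla rkS rkD R1 R2)) s (dom_relabel s).
Proof.
elim/tree_ind_In: s => a ss IH /= /andP[_ wr_ss]; constructor.
  rewrite Forall2_map_l; apply: Forall2_diag => s ss_s.
  rewrite /accepts runsE; apply: (dom_aut_accepts (all_In wr_ss ss_s)) => x.
  by rewrite inE => /asboolP.
rewrite Forall2_map_r; apply: Forall2_diag => s ss_s.
exact: IH (all_In wr_ss ss_s).
Qed.

Local Notation M_rules :=
  (fun st (x : Sg * seq {set Q1 * {set Q2}}) g => Mrules rkS rkD R1 R2 st x.1 x.2 g).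

Lemma runs_M_dom_relabel s : wr rkS s -> forall q (S : {set Q2}) q2 t r, q2 \in S ->
  runs T1h (q, S) s t -> runs R2 q2 t r -> runs M_rules ((q, S), q2) (dom_relabel s) r.
Proof.
elim/tree_ind_In: s => a ss IH /= /andP[/eqP size_ss wr_ss] q S q2 t r Sq2.
move=> /runs_nodeP[z [xi [R1xi /translateE[_ tr]]] zt] run_r.
have runs_q2 p : p \in [set q2] -> exists r', runs R2 p t r' by move=> /set1P ->; exists r.
have [z' [tr' lv' zt' thru]] :=
  saturable_rhs_all (fun s _ => @saturable_all s) tr zt runs_q2.
have [g tr_g [lv_g gr]] := thru q2 r (set11 q2) run_r.
rewrite (setUidPl _) ?sub1set // in tr'.
apply/runs_nodeP; exists g; last first.
  apply: (rhs_inst_impl gr) => -[[q' S'] p'] i r' _ [/= S'p' [si [t' [Esi run_t' run_r']]]].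
  exists (dom_relabel si); first by rewrite -map_drop -map_take Esi.
  have [ss_si _ _] := take1_drop_inv Esi.
  exact: IH ss_si (all_In wr_ss ss_si) _ _ _ _ _ S'p' run_t' run_r'.
split=> //.
  by move=> st' i /(rhs_inst_vars gr)[r' []].
exists z'; split=> //.
- by exists xi; split=> //; apply/translateE.
- by apply/translateE.
- by rewrite size_map.
move=> i lt_i st' /(rhs_inst_vars zt')[t' [si Esi run_t']].
have [_ _ nth_si] := take1_drop_inv Esi.
by rewrite (nth_map (Node a ss)) ?size_ss // nth_si inE; apply/asboolP; exists t'.
Qed.
End Composition.

Theorem lemma5 (Sg De Om : finType) (rkS : Sg -> nat) (rkD : De -> nat) (rkO : Om -> nat)
  (Q1 Q2 : finType)
  (R1 : seq (Q1 * Sg * tree (De + Q1 * nat)))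
  (R2 : seq (Q2 * De * tree (Om + Q2 * nat)))
  (q10 : Q1) (q20 : Q2)
  (wf1 : wf_td rkS rkD R1) (wf2 : wf_td rkD rkO R2)
  (q1 : Q1) (S : {set Q2}) (q2 : Q2) (HM : q2 \in S)
  (s : tree Sg) (t : tree De) (r : tree Om) (Hs : wr rkS s) :
  produces (That1 rkD (rules_of R1) (rules_of R2)) (q1, S) s t ->
  produces (rules_of R2) q2 t r ->
  M_produces rkS rkD (rules_of R1) (rules_of R2) ((q1, S), q2) s r.
Proof.
move=> /runsE run_t /runsE run_r.
exists (dom_relabel rkD (rules_of R1) (rules_of R2) s).
split; first exact: relab_dom_relabel.
exact/runsE/(runs_M_dom_relabel Hs HM run_t run_r).
Qed.
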